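(* Let $X$ be a real locally convex Hausdorff topological vector space with topological dual $X^*$. A nonempty subset $D\subset X$ is a convex polyhedron in $X$ if and only if there exist closed linear subspaces $X_0$, $X_1$ of $X$ and a convex polyhedron $D_1$ of the space $X_1$ such that $$X=X_0+X_1,\qquad X_0\cap X_1=\{0\},\qquad \dim X_1<+\infty,$$ and $$D=D_1+X_0.$$
   Context: For $x^*\in X^*$ and $x\in X$, $\langle x^*,x\rangle$ denotes the value of $x^*$ at $x$. A subset $C$ of a real locally convex Hausdorff topological vector space $Z$ is called a convex polyhedron (polyhedral convex set) of $Z$ if there exist finitely many $z_i^*\in Z^*$ and $\alpha_i\in\mathbb{R}$, $i=1,\dots,p$ ($p\ge 0$; the intersection of an empty family is $Z$), such that $C=\{z\in Z\mid \langle z_i^*,z\rangle\le\alpha_i,\ i=1,\dots,p\}$. Here $X_1$ is regarded with the topology induced from $X$, and $D_1$ being a convex polyhedron of $X_1$ means this definition with $Z=X_1$. *)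

From HB Require Import structures.
From mathcomp Require Import all_boot all_order all_algebra.
From mathcomp Require Import all_classical all_reals all_analysis.
Set Implicit Arguments. Unset Strict Implicit. Unset Printing Implicit Defensive.
Import Order.TTheory GRing.Theory Num.Theory.
Local Open Scope classical_set_scope.
Local Open Scope ring_scope.
Import numFieldNormedType.Exports.

(* Real locally convex spaces: [tvsType R] (locally convex by definition). *)

Definition lin_functional (R : realType) (E : tvsType R) (f : E -> R) : Prop :=
  forall (a : R) (x y : E), f (a *: x + y) = a * f x + f y.

Definition dual_elt (R : realType) (E : tvsType R) (f : E -> R) : Prop :=
  lin_functional f /\ continuous f.

Definition convex_polyhedron (R : realType) (E : tvsType R) (C : set E) : Prop :=
  exists (p : nat) (z : 'I_p -> E -> R) (alpha : 'I_p -> R),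
    (forall i, dual_elt (z i)) /\
    C = [set x | forall i, z i x <= alpha i].

Definition lin_subspace (R : realType) (E : tvsType R) (S : set E) : Prop :=
  S 0 /\ forall (a : R) (x y : E), S x -> S y -> S (a *: x + y).

(* A functional on the subspace S (represented by any function on E, only its
   restriction to S matters) which is linear on S and continuous for the
   topology induced on S: an element of S^*. *)
Definition sub_dual_elt (R : realType) (E : tvsType R) (S : set E)
    (f : E -> R) : Prop :=
  (forall (a : R) (x y : E), S x -> S y -> f (a *: x + y) = a * f x + f y) /\
  {within S, continuous f}.

Definition convex_polyhedron_in (R : realType) (E : tvsType R) (S C : set E) : Prop :=
  exists (p : nat) (z : 'I_p -> E -> R) (alpha : 'I_p -> R),
    (forall i, sub_dual_elt S (z i)) /\
    C = [set x | S x /\ forall i, z i x <= alpha i].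

Definition finite_dim (R : realType) (E : tvsType R) (S : set E) : Prop :=
  exists (n : nat) (v : 'I_n -> E),
    S = [set x | exists c : 'I_n -> R, x = \sum_(i < n) c i *: v i].

From HB Require Import structures.
From mathcomp Require Import all_boot all_order all_algebra.
From mathcomp Require Import all_classical all_reals all_analysis.
From mathcomp Require Import lra.
Import Order.TTheory GRing.Theory Num.Theory.
Local Open Scope classical_set_scope.
Local Open Scope ring_scope.
Import numFieldNormedType.Exports.
Set Implicit Arguments. Unset Strict Implicit.

(* A polyhedron [D = {x | z_i x <= a_i}] is invariant under the common kernel [X0]
   of the [z_i], which has finite codimension: adding the functionals one at a time
   yields finitely many vectors spanning an algebraic complement [X1]. In a
   Hausdorff space [X1] is closed, because a closed subspace plus one vector stays
   closed: the coefficient along the new vector is uniformly continuous near the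
   subspace, so it extends to the closure. Then [D = (D \cap X1) + X0].
   Conversely, [D1 + X0] is cut out by the [g_i \o P], where the [g_i] define [D1]
   and [P] projects onto [X1] along [X0]. Their kernels contain the closed subspace
   [X0] of finite codimension and are therefore closed, and a linear functional with
   a closed kernel is continuous. *)

Lemma forall_ord_recl n (P : 'I_n.+1 -> Prop) :
  (forall i, P i) <-> P ord0 /\ forall i, P (lift ord0 i).
Proof.
split=> [h|[h0 h] i]; first by split.
by case: (unliftP ord0 i) => [j ->|->].
Qed.

Section TopologicalVectorSpace.
Context {R : realType} {X : tvsType R}.
Implicit Types (f : X -> R) (A B K Y : set X) (u w x y : X).

Lemma lin_functional0 f : lin_functional f -> f 0 = 0.
Proof. by move=> hf; have := hf (-1) 0 0; rewrite scaler0 addr0 mulN1r addNr. Qed.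

Lemma lin_functionalD f : lin_functional f -> {morph f : x y / x + y}.
Proof. by move=> hf x y; have := hf 1 x y; rewrite scale1r mul1r. Qed.

Lemma lin_functionalZ f a x : lin_functional f -> f (a *: x) = a * f x.
Proof. by move=> hf; have := hf a x 0; rewrite !addr0 lin_functional0 // addr0. Qed.

Lemma lin_functionalB f : lin_functional f -> {morph f : x y / x - y}.
Proof.
by move=> hf x y; rewrite lin_functionalD // -scaleN1r lin_functionalZ // mulN1r.
Qed.

Lemma lin_functional_sum f n (c : 'I_n -> R) (v : 'I_n -> X) : lin_functional f ->
  f (\sum_(i < n) c i *: v i) = \sum_(i < n) c i * f (v i).
Proof.
move=> hf; apply: (big_rec2 (fun a b => f b = a)); first exact: lin_functional0.
by move=> i a b _ <-; rewrite hf.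
Qed.

Lemma sub_dual_elt0 Y f : lin_subspace Y -> sub_dual_elt Y f -> f 0 = 0.
Proof.
by move=> [Y0 _] [hf _]; have := hf (-1) 0 0 Y0 Y0; rewrite scaler0 addr0 mulN1r addNr.
Qed.

Lemma sub_dual_elt_dual_elt Y f : dual_elt f -> sub_dual_elt Y f.
Proof.
by move=> [hf cf]; split=> [a x y _ _|]; [exact: hf | exact: continuous_subspaceT].
Qed.

Lemma lin_subspaceD Y x y : lin_subspace Y -> Y x -> Y y -> Y (x + y).
Proof. by move=> [_ hY] Yx Yy; have := hY 1 x y Yx Yy; rewrite scale1r. Qed.

Lemma lin_subspaceZ Y a x : lin_subspace Y -> Y x -> Y (a *: x).
Proof. by move=> [Y0 hY] Yx; have := hY a x 0 Yx Y0; rewrite addr0. Qed.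

Lemma lin_subspaceB Y x y : lin_subspace Y -> Y x -> Y y -> Y (x - y).
Proof.
by move=> hY Yx Yy; rewrite -scaleN1r; apply: lin_subspaceD => //; exact: lin_subspaceZ.
Qed.

Lemma lin_subspaceT : lin_subspace [set: X].
Proof. by split. Qed.

Lemma lin_subspace_ker f : lin_functional f -> lin_subspace [set x | f x = 0].
Proof.
move=> hf; split=> [|a x y /= fx fy]; first exact: lin_functional0.
by rewrite hf fx fy mulr0 addr0.
Qed.

Lemma lin_subspace_common_ker p (z : 'I_p -> X -> R) :
  (forall i, lin_functional (z i)) -> lin_subspace [set x | forall i, z i x = 0].
Proof.
move=> hz; split=> [i|a x y zx zy i]; first exact: lin_functional0.
by rewrite hz zx zy mulr0 addr0.
Qed.

Lemma trivial_intersectionP A B : A 0 -> B 0 ->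
  A `&` B = [set 0] <-> forall x, A x -> B x -> x = 0.
Proof.
move=> A0 B0; split=> [AB x Ax Bx | AB]; first by have : (A `&` B) x by []; rewrite AB.
by apply/seteqP; split=> [x [Ax Bx] | _ ->] //; exact: AB.
Qed.

Definition sumset A B : set X := [set x | exists a b, [/\ A a, B b & x = a + b]].

Definition lin_span n (v : 'I_n -> X) : set X :=
  [set x | exists c : 'I_n -> R, x = \sum_(i < n) c i *: v i].

Definition line w : set X := range (fun t : R => t *: w).

Definition complementary A B := sumset A B = setT /\ forall x, A x -> B x -> x = 0.

Lemma lin_subspace_sumset A B :
  lin_subspace A -> lin_subspace B -> lin_subspace (sumset A B).
Proof.
move=> hA hB; split.
  by exists 0, 0; rewrite addr0; split; [exact: hA.1 | exact: hB.1 |].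
move=> a _ _ [x [y [Ax By ->]]] [x' [y' [Ax' By' ->]]].
exists (a *: x + x'), (a *: y + y'); split; [exact: hA.2 | exact: hB.2 |].
by rewrite scalerDr addrACA.
Qed.

Lemma lin_subspace_lin_span n (v : 'I_n -> X) : lin_subspace (lin_span v).
Proof.
split; first by exists (fun=> 0); rewrite big1 // => i _; rewrite scale0r.
move=> a _ _ [c ->] [d ->]; exists (fun i => a * c i + d i).
by rewrite scaler_sumr -big_split; apply: eq_bigr => i _; rewrite scalerDl scalerA.
Qed.

Lemma lin_subspace_line w : lin_subspace (line w).
Proof.
split; first by exists 0 => //; rewrite scale0r.
by move=> a _ _ [s _ <-] [t _ <-]; exists (a * s + t) => //; rewrite scalerDl scalerA.
Qed.

Lemma sumset_lin_span0 Y (v : 'I_0 -> X) : sumset Y (lin_span v) = Y.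
Proof.
apply/seteqP; split=> [_ [y [_ [Yy [c ->] ->]]] | y Yy]; first by rewrite big_ord0 addr0.
by exists y, 0; split=> //; [exists (fun=> 0); rewrite big_ord0 | rewrite addr0].
Qed.

Lemma sumset_lin_span_recl Y n (v : 'I_n.+1 -> X) :
  sumset Y (lin_span v) =
  sumset (sumset Y (line (v ord0))) (lin_span (fun i => v (lift ord0 i))).
Proof.
apply/seteqP; split=> [_ [y [_ [Yy [c ->] ->]]] |
                       _ [_ [_ [[y [_ [Yy [t _ <-] ->]]] [c ->] ->]]]].
  exists (y + c ord0 *: v ord0), (\sum_(i < n) c (lift ord0 i) *: v (lift ord0 i)).
  split; [by exists y, (c ord0 *: v ord0); split=> //; exists (c ord0) | by eexists |].
  by rewrite big_ord_recl addrA.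
exists y, (t *: v ord0 + \sum_(i < n) c i *: v (lift ord0 i)).
split=> //; last by rewrite addrA.
exists (fun i => if unlift ord0 i is Some j then c j else t).
rewrite big_ord_recl unlift_none; congr (_ + _).
by apply: eq_bigr => i _; rewrite liftK.
Qed.

Lemma lin_functional_eq1_or_vanish Y f : lin_subspace Y -> lin_functional f ->
  (exists2 u, Y u & f u = 1) \/ (forall y, Y y -> f y = 0).
Proof.
move=> hY hf; have [[y Yy fy]|nf] := pselect (exists2 y, Y y & f y != 0).
  left; exists ((f y)^-1 *: y); first exact: lin_subspaceZ.
  by rewrite lin_functionalZ // mulVf.
by right=> y Yy; apply: contrapT => fy; apply: nf; exists y => //; exact/eqP.
Qed.

Lemma complementary_setI_ker K f n (v : 'I_n -> X) :
  lin_subspace K -> lin_functional f -> complementary K (lin_span v) ->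
  exists m (v' : 'I_m -> X), complementary (K `&` [set x | f x = 0]) (lin_span v').
Proof.
move=> hK hf [Kv Kv0].
have [[u Ku fu] | fK] := lin_functional_eq1_or_vanish hK hf; last first.
  exists n, v; suff -> : K `&` [set x | f x = 0] = K by [].
  by apply/seteqP; split=> [x [] // | x Kx]; split=> //; exact: fK.
pose v' (j : 'I_n.+1) := if unlift ord0 j is Some k then v k else u.
have v'E : (fun i => v' (lift ord0 i)) = v by apply/funext => i; rewrite /v' liftK.
exists n.+1, v'; split.
  rewrite sumset_lin_span_recl v'E /v' unlift_none; apply/seteqP; split=> // x _.
  have : setT x by []; rewrite -Kv => -[k [s [Kk vs ->]]].
  exists (k - f k *: u + f k *: u), s; split=> //; last by rewrite subrK.
  exists (k - f k *: u), (f k *: u); split=> //; last by exists (f k).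
  split; first by apply: lin_subspaceB => //; exact: lin_subspaceZ.
  by rewrite /= lin_functionalB // lin_functionalZ // fu mulr1 subrr.
move=> x [Kx fx] [c xE].
have {}xE : x = c ord0 *: u + \sum_(i < n) c (lift ord0 i) *: v i.
  rewrite xE big_ord_recl /v' unlift_none; congr (_ + _).
  by apply: eq_bigr => i _; rewrite liftK.
have s0 : \sum_(i < n) c (lift ord0 i) *: v i = 0.
  apply: Kv0; last by exists (fun i => c (lift ord0 i)).
  have : K (- (c ord0 *: u) + x).
    by rewrite -scaleNr; apply: lin_subspaceD => //; exact: lin_subspaceZ.
  by rewrite xE addKr.
move: fx; rewrite /= xE s0 addr0 lin_functionalZ // fu mulr1 => ->.
by rewrite scale0r.
Qed.

Lemma complementary_common_ker p (z : 'I_p -> X -> R) :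
  (forall i, lin_functional (z i)) ->
  exists n (v : 'I_n -> X), complementary [set x | forall i, z i x = 0] (lin_span v).
Proof.
elim: p z => [|p IH] z hz.
  exists 0, (fun=> 0); split=> [|x _ [c ->]]; last exact: big_ord0.
  by rewrite sumset_lin_span0; apply/seteqP; split=> // x _ [].
have [n [v hv]] := IH (fun i => z (lift ord0 i)) (fun i => hz _).
have hK := lin_subspace_common_ker (fun i => hz (lift ord0 i)).
have [m [v' hv']] := complementary_setI_ker hK (hz ord0) hv.
exists m, v'; suff -> : [set x | forall i, z i x = 0] =
  [set x | forall i, z (lift ord0 i) x = 0] `&` [set x | z ord0 x = 0] by [].
by apply/seteqP; split=> x /= => [/(forall_ord_recl (fun i => z i x = 0)) [] | []] //;
  move=> h h0; apply/(forall_ord_recl (fun i => z i x = 0)).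
Qed.

Lemma polyhedron_sumset_common_ker p (z : 'I_p -> X -> R) (al : 'I_p -> R) B :
  (forall i, lin_functional (z i)) ->
  sumset [set x | forall i, z i x = 0] B = setT ->
  [set x | forall i, z i x <= al i] =
  sumset (B `&` [set x | forall i, z i x <= al i]) [set x | forall i, z i x = 0].
Proof.
move=> hz KB; apply/seteqP; split=> [x zx | _ [b [k [[Bb zb] zk ->]]] i] /=.
  have : setT x by []; rewrite -KB => -[k [b [zk Bb xE]]].
  exists b, k; split=> //; last by rewrite xE addrC.
  by split=> // i; have := zx i; rewrite xE lin_functionalD // zk add0r.
by rewrite lin_functionalD // zk addr0; exact: zb.
Qed.

Lemma nbhs0_sub_subset (V : set X) :
  nbhs 0 V -> exists2 A : set X, nbhs 0 A & forall a b, A a -> A b -> V (a - b).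
Proof.
move=> V0; have := @sub_continuous X (0, 0) V; rewrite /= subr0 => /(_ V0).
move=> [/= [A B] [A0 B0] AB]; exists (A `&` B); first exact: filterI.
by move=> a b [Aa _] [_ Bb]; exact: (AB (a, b)).
Qed.

Lemma nbhs0_line_coef_lt Y w e : lin_subspace Y -> closed Y -> ~ Y w -> 0 < e ->
  nbhs (0 : X) [set v | forall y t, Y y -> v = y + t *: w -> `|t| < e].
Proof.
move=> hY cY Yw e0.
have B0 : nbhs (0 : X) [set b | ~ Y (w - b)].
  have nw : nbhs w (~` Y) by apply: open_nbhs_nbhs; split=> //; rewrite openC.
  have := nbhsB (- w) nw; rewrite addNr => /nbhs0N.
  apply: filterS => _ [_ [u Yu <-] <-].
  by rewrite /= opprK addNKr.
have := scale_continuous ((0 : R^o), (0 : X)) _; rewrite scaler0 => /(_ _ B0).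
move=> [/= [I U] [/nbhs_ballP [d /= d0 dI] U0] IU].
have s0 : 0 < d * e / 2 by rewrite divr_gt0 ?mulr_gt0.
have := nbhs0Z (lt0r_neq0 s0) U0; apply: filterS => _ [u Uu <-] y t Yy /= uE.
rewrite ltNge; apply/negP => et.
(* Otherwise [w + t^-1 *: y = k *: u] with [k := t^-1 * (d * e / 2)] and [|k| < d],
   so [- t^-1 *: y = w - k *: u] would avoid [Y]. *)
have t0 : t != 0 by apply: contraTneq et => ->; rewrite normr0 -ltNge.
have : ~ Y (w - (t^-1 * (d * e / 2)) *: u).
  apply: (IU (_, _)); split=> //=; apply: dI.
  rewrite /ball /= sub0r normrN normrM normfV (gtr0_norm s0) mulrC.
  rewrite ltr_pdivrMr ?(lt_le_trans e0 et) // -mulrA ltr_pM2l //; lra.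
apply; rewrite -scalerA uE scalerDr scalerA mulVf // scale1r.
rewrite opprD addrCA subrr addr0.
by rewrite -scaleNr; exact: lin_subspaceZ.
Qed.

Definition line_coef Y w x : R := xget 0 [set t : R | Y (x - t *: w)].

Lemma line_coefP Y w x : sumset Y (line w) x -> Y (x - line_coef Y w x *: w).
Proof.
move=> [y [_ [Yy [t _ <-] ->]]]; apply: (@xgetPex _ 0 [set t | Y (_ - t *: w)]).
by exists t; rewrite /= addrK.
Qed.

Lemma cauchy_line_coef Y w x : lin_subspace Y -> closed Y -> ~ Y w ->
  closure (sumset Y (line w)) x ->
  cauchy (line_coef Y w @ within (sumset Y (line w)) (nbhs x)).
Proof.
move=> hY cY Yw clx; apply: cauchy_exP => e e0.
have [A A0 AV] := nbhs0_sub_subset (nbhs0_line_coef_lt hY cY Yw e0).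
have [p [Zp [a Aa pE]]] := clx _ (nbhsT x A0).
exists (line_coef Y w p).
suff : \forall q \near within (sumset Y (line w)) (nbhs x),
  ball (line_coef Y w p) e (line_coef Y w q) by [].
rewrite near_withinE; have := nbhsT x A0; apply: filterS => _ [b Ab <-] Zq.
rewrite -ball_normE /ball_ /=.
set q := x + b; set c := line_coef Y w.
apply: (AV a b Aa Ab ((p - c p *: w) - (q - c q *: w))).
  by apply: lin_subspaceB => //; exact: line_coefP.
rewrite scalerBl addrACA subrK -opprD subrK.
by rewrite -pE /q /= opprD addrACA subrr add0r.
Qed.

Lemma closed_sumset_line Y w :
  lin_subspace Y -> closed Y -> closed (sumset Y (line w)).
Proof.
move=> hY cY; have [Yw|Yw] := pselect (Y w).
  suff -> : sumset Y (line w) = Y by [].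
  apply/seteqP; split=> [_ [y [_ [Yy [t _ <-] ->]]] | y Yy].
    by apply: lin_subspaceD => //; exact: lin_subspaceZ.
  by exists y, 0; split=> //; [exists 0 => //; rewrite scale0r | rewrite addr0].
move=> x clx; set F := within (sumset Y (line w)) (nbhs x).
have FF : ProperFilter F by exact: within_nbhs_proper.
set t := lim (line_coef Y w @ F).
have coef_cvg : line_coef Y w @ F --> t.
  exact: cauchy_cvg _ (cauchy_line_coef hY cY Yw clx).
have cvg_Y : (fun q => q - line_coef Y w q *: w) @ F --> x - t *: w.
  apply: (continuous2_cvg _ (h := fun a b => a - b)).
  - exact: (@sub_continuous X (_, _)).
  - exact: cvg_within.
  apply: (continuous2_cvg _ (h := fun (s : R^o) v => s *: v)).
  - exact: (scale_continuous (_, _)).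
  - exact: coef_cvg.
  - exact: cvg_cst.
have Yx : Y (x - t *: w).
  apply: (closed_cvg _ cY _ _ cvg_Y); rewrite near_withinE.
  by apply: nearW => q; exact: line_coefP.
exists (x - t *: w), (t *: w); split=> //; last by rewrite subrK.
by exists t.
Qed.

Lemma closed_sumset_lin_span n Y (v : 'I_n -> X) :
  lin_subspace Y -> closed Y -> closed (sumset Y (lin_span v)).
Proof.
elim: n Y v => [|n IH] Y v hY cY; first by rewrite sumset_lin_span0.
rewrite sumset_lin_span_recl; apply: IH; last exact: closed_sumset_line.
by apply: lin_subspace_sumset => //; exact: lin_subspace_line.
Qed.

Lemma closed_lin_span n (v : 'I_n -> X) : hausdorff_space X -> closed (lin_span v).
Proof.
move=> hX; have -> : lin_span v = sumset [set 0] (lin_span v).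
  apply/seteqP; split=> [x vx | _ [_ [s [-> vs ->]]]]; last by rewrite add0r.
  by exists 0, x; rewrite add0r.
apply: closed_sumset_lin_span; last exact/accessible_closed_set1/hausdorff_accessible.
by split=> // a _ _ -> ->; rewrite scaler0 addr0.
Qed.

Lemma closed_common_ker p (z : 'I_p -> X -> R) :
  (forall i, continuous (z i)) -> closed [set x | forall i, z i x = 0].
Proof.
move=> hz; suff -> : [set x | forall i, z i x = 0] = \bigcap_i (z i @^-1` [set 0]).
  by apply: closed_bigI => i _; move/continuous_closedP: (hz i); apply; exact: closed_eq.
by apply/seteqP; split=> x /= h i => [_|]; apply: h.
Qed.

Lemma continuous_lin_functional_closed_ker f :
  lin_functional f -> closed [set x | f x = 0] -> continuous f.
Proof.
move=> hf cker.
have [[u _ fu] | f0] := lin_functional_eq1_or_vanish lin_subspaceT hf; last first.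
  have -> : f = cst 0 by apply/funext => x; exact: f0.
  exact: cst_continuous.
have ker_u : ~ [set x | f x = 0] u by rewrite /= fu; exact/eqP/oner_neq0.
move=> x; apply/cvgrPdist_lt => e e0.
have := nbhsT x (nbhs0_line_coef_lt (lin_subspace_ker hf) cker ker_u e0).
apply: filterS => _ [v Vv <-]; rewrite lin_functionalD // opprD addNKr normrN.
apply: (Vv (v - f v *: u)); last by rewrite subrK.
by rewrite /= lin_functionalB // lin_functionalZ // fu mulr1 subrr.
Qed.

Lemma continuous_lin_functional_finite_codim Y n (v : 'I_n -> X) f :
  lin_subspace Y -> closed Y -> sumset Y (lin_span v) = setT ->
  lin_functional f -> (forall y, Y y -> f y = 0) -> continuous f.
Proof.
move=> hY cY Yv hf fY; apply: continuous_lin_functional_closed_ker => //.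
have [[u _ fu] | f0] := lin_functional_eq1_or_vanish lin_subspaceT hf; last first.
  suff -> : [set x | f x = 0] = setT by exact: closedT.
  by apply/seteqP; split=> // x _; exact: f0.
pose v' i := v i - f (v i) *: u.
suff -> : [set x | f x = 0] = sumset Y (lin_span v') by exact: closed_sumset_lin_span.
apply/seteqP; split=> [x fx | _ [y [_ [Yy [c ->] ->]]]]; last first.
  rewrite /= lin_functionalD // fY // add0r lin_functional_sum // big1 // => i _.
  by rewrite /v' lin_functionalB // lin_functionalZ // fu mulr1 subrr mulr0.
have : setT x by []; rewrite -Yv => -[y [_ [Yy [c ->] xE]]].
exists y, (\sum_(i < n) c i *: v' i); split=> //; first by exists c.
rewrite xE in fx *; congr (_ + _); apply/esym; rewrite /v'.
under eq_bigr do rewrite scalerBr scalerA.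
rewrite sumrB -scaler_suml -lin_functional_sum //.
by move: fx; rewrite /= lin_functionalD // fY // add0r => ->; rewrite scale0r subr0.
Qed.

Section Projection.
Variables (X0 X1 : set X).
Hypotheses (hX0 : lin_subspace X0) (hX1 : lin_subspace X1).
Hypothesis hX01 : complementary X0 X1.

Definition proj (x : X) : X := xget 0 [set x1 | X1 x1 /\ X0 (x - x1)].

Lemma projP x : X1 (proj x) /\ X0 (x - proj x).
Proof.
apply: (@xgetPex _ 0 [set x1 | X1 x1 /\ X0 (x - x1)]).
have : setT x by []; rewrite -hX01.1 => -[x0 [x1 [X0x0 X1x1 ->]]].
by exists x1; rewrite /= addrK.
Qed.

Lemma proj_unique x x1 : X1 x1 -> X0 (x - x1) -> proj x = x1.
Proof.
move=> X1x1 X0x1; have [X1p X0p] := projP x.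
apply/eqP; rewrite -subr_eq0; apply/eqP; apply: hX01.2; last exact: lin_subspaceB.
have -> : proj x - x1 = (x - x1) - (x - proj x).
  by rewrite opprB [RHS]addrC addrA subrK.
exact: lin_subspaceB.
Qed.

Lemma proj_linear a x y : proj (a *: x + y) = a *: proj x + proj y.
Proof.
have [X1x X0x] := projP x; have [X1y X0y] := projP y.
apply: proj_unique; first by apply: lin_subspaceD => //; exact: lin_subspaceZ.
have -> : a *: x + y - (a *: proj x + proj y) = a *: (x - proj x) + (y - proj y).
  by rewrite scalerBr opprD addrACA.
by apply: lin_subspaceD => //; exact: lin_subspaceZ.
Qed.

Lemma proj_addr x1 x0 : X1 x1 -> X0 x0 -> proj (x1 + x0) = x1.
Proof. by move=> X1x1 X0x0; apply: proj_unique => //; rewrite addrC addKr. Qed.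

Lemma proj_X0 x : X0 x -> proj x = 0.
Proof. by move=> X0x; rewrite -[x]add0r proj_addr //; exact: hX1.1. Qed.

Lemma dual_elt_comp_proj n (v : 'I_n -> X) g :
  closed X0 -> X1 = lin_span v -> sub_dual_elt X1 g -> dual_elt (g \o proj).
Proof.
move=> cX0 X1v hg; have [hgl _] := hg.
have hf : lin_functional (g \o proj).
  by move=> a x y /=; rewrite proj_linear hgl //; exact: (projP _).1.
split=> //; apply: (continuous_lin_functional_finite_codim (v := v) hX0 cX0 _ hf).
  by rewrite -X1v hX01.1.
by move=> y X0y /=; rewrite proj_X0 //; exact: sub_dual_elt0 hg.
Qed.

Lemma sumset_polyhedron_in p (g : 'I_p -> X -> R) (al : 'I_p -> R) :
  sumset [set x | X1 x /\ forall i, g i x <= al i] X0 =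
  [set x | forall i, (g i \o proj) x <= al i].
Proof.
apply/seteqP; split=> [_ [x1 [x0 [[X1x1 gx1] X0x0 ->]]] i | x gx] /=.
  by rewrite proj_addr.
have [X1p X0p] := projP x.
by exists (proj x), (x - proj x); split=> //; rewrite addrC subrK.
Qed.

End Projection.

End TopologicalVectorSpace.

Theorem proposition2p6 (R : realType) (X : tvsType R)
    (hX : hausdorff_space X) (D : set X) (hD : D !=set0) :
  convex_polyhedron D <->
  exists (X0 X1 D1 : set X),
    [/\ lin_subspace X0 /\ closed X0, lin_subspace X1 /\ closed X1,
        [set x | exists x0 x1, [/\ X0 x0, X1 x1 & x = x0 + x1]] = setT,
        X0 `&` X1 = [set 0] & finite_dim X1] /\
    convex_polyhedron_in X1 D1 /\
    D = [set x | exists d1 x0, [/\ D1 d1, X0 x0 & x = d1 + x0]].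
Proof.
split=> [[p [z [al [hz ->]]]] |
  [X0 [X1 [D1 [[[hX0 cX0] [hX1 _] cover cap [n [v X1v]]] [[p [g [al [hg ->]]]] ->]]]]]].
  have hzl i : lin_functional (z i) := (hz i).1.
  have [n [v [cover cap]]] := complementary_common_ker hzl.
  exists [set x | forall i, z i x = 0], (lin_span v),
    (lin_span v `&` [set x | forall i, z i x <= al i]).
  split; [split | split].
  - split; first exact: lin_subspace_common_ker.
    exact: closed_common_ker (fun i => (hz i).2).
  - split; [exact: lin_subspace_lin_span | exact: closed_lin_span].
  - exact: cover.
  - apply/trivial_intersectionP => //.
      exact: (lin_subspace_common_ker hzl).1.
    exact: (lin_subspace_lin_span v).1.
  - by exists n, v.
  - by exists p, z, al; split=> // i; exact: sub_dual_elt_dual_elt.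
  - exact: polyhedron_sumset_common_ker.
have X01 : complementary X0 X1.
  by split=> //; apply/trivial_intersectionP => //; [exact: hX0.1 | exact: hX1.1].
exists p, (fun i => g i \o proj X0 X1), al; split; last exact: sumset_polyhedron_in.
by move=> i; apply: dual_elt_comp_proj X1v (hg i).
Qed.
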